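(* Let ${\tt G}$ be a digraph, $P\subseteq SSG({\tt G})$ a downward closed (or upward closed) sub-poset, $\mathbf A$ an additive category and $\mathcal F\colon\mathbf P\to\mathbf A$ a covariant functor. Then the cochain complex $(C^*_{\mathcal F}(P),d^* )$ does not depend, up to isomorphism of cochain complexes, on the choice of the sign assignment on $P$ used to define it.
   Context: A digraph ${\tt G}=(V,E)$ has finite $V$ and $E\subseteq(V\times V)\setminus\{(v,v)\}$. $SSG({\tt G})$ is the poset of spanning subgraphs (all vertices, any subset of edges) ordered by inclusion of edge sets; in it ${\tt H}\prec{\tt H}'$ (covering) iff ${\tt H}'$ has exactly one more edge. A sub-poset $P$ is downward closed if $h\le h'\in P$ implies $h\in P$, upward closed if $P\ni h'\le h$ implies $h\in P$. A sign assignment on $P$ assigns $\epsilon({\tt H},{\tt H}')\in\mathbb Z_2$ to each covering pair in $P$ so that around every square ${\tt H}\prec{\tt H}_1,{\tt H}_2\prec{\tt H}''$ ($ {\tt H}_1\neq{\tt H}_2$) one has $\epsilon({\tt H},{\tt H}_1)+\epsilon({\tt H}_1,{\tt H}'')\equiv\epsilon({\tt H},{\tt H}_2)+\epsilon({\tt H}_2,{\tt H}'')+1\pmod 2$. $\mathbf P$ is the category with objects the elements of $P$ and a unique morphism ${\tt H}\to{\tt H}'$ iff ${\tt H}\le{\tt H}'$. Given a sign assignment $\epsilon$, $C^n_{\mathcal F}(P)=\bigoplus_{{\tt H}\in P,\ \ell({\tt H})=n}\mathcal F({\tt H})$ with $\ell({\tt H})=\#E({\tt H})-\min_{{\tt H}'\in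 P}\#E({\tt H}')$ and $d^n=\sum_{{\tt H}\prec{\tt H}'\text{ in }P,\ \ell({\tt H})=n}(-1)^{\epsilon({\tt H},{\tt H}')}\mathcal F({\tt H}\prec{\tt H}')$. *)

From HB Require Import structures.
From mathcomp Require Import all_boot all_order all_algebra.
Set Implicit Arguments. Unset Strict Implicit. Unset Printing Implicit Defensive.
Import GRing.Theory.
Local Open Scope ring_scope.

(* A preadditive category (hom-sets are abelian groups, composition is
   bilinear) equipped with a chosen biproduct for every finite family of
   objects (indexed by a finite type; the empty family gives a zero object).
   Composition is written in diagrammatic order: [comp f g] = "g after f". *)
Record additiveCat := AdditiveCat {
  Ob : Type;
  Hom : Ob -> Ob -> zmodType;
  idm : forall a, Hom a a;
  comp : forall a b c, Hom a b -> Hom b c -> Hom a c;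
  compA : forall a b c d (f : Hom a b) (g : Hom b c) (h : Hom c d),
      comp (comp f g) h = comp f (comp g h);
  comp1m : forall a b (f : Hom a b), comp (idm a) f = f;
  compm1 : forall a b (f : Hom a b), comp f (idm b) = f;
  compDl : forall a b c (f g : Hom a b) (h : Hom b c),
      comp (f + g) h = comp f h + comp g h;
  compDr : forall a b c (f : Hom a b) (g h : Hom b c),
      comp f (g + h) = comp f g + comp f h;
  bigob : forall (I : finType), (I -> Ob) -> Ob;
  binj : forall (I : finType) (X : I -> Ob) (i : I), Hom (X i) (bigob X);
  bproj : forall (I : finType) (X : I -> Ob) (i : I), Hom (bigob X) (X i);
  binj_proj : forall (I : finType) (X : I -> Ob) (i : I),
      comp (binj X i) (bproj X i) = idm (X i);
  binj_proj0 : forall (I : finType) (X : I -> Ob) (i j : I), i != j ->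
      comp (binj X i) (bproj X j) = 0;
  bproj_inj_sum : forall (I : finType) (X : I -> Ob),
      \sum_(i : I) comp (bproj X i) (binj X i) = idm (bigob X)
}.
Arguments idm {A} a : rename.
Arguments comp {A a b c} : rename.
Arguments bigob {A I} : rename.
Arguments binj {A I X} i : rename.
Arguments bproj {A I X} i : rename.

(* A digraph on the finite vertex type V is an edge set E : {set V * V}
   without loops; a spanning subgraph is identified with its edge set
   H \subset E, and SSG(G) is ordered by inclusion of edge sets. *)
Definition loopless (V : finType) (E : {set V * V}) : Prop :=
  forall v : V, (v, v) \notin E.

Definition sub_SSG (V : finType) (E : {set V * V}) (P : {set {set V * V}}) :=
  forall H, H \in P -> H \subset E.

Definition downward_closed (V : finType) (E : {set V * V})
    (P : {set {set V * V}}) : Prop :=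
  forall h h' : {set V * V}, h \subset E -> h \subset h' -> h' \in P -> h \in P.

Definition upward_closed (V : finType) (E : {set V * V})
    (P : {set {set V * V}}) : Prop :=
  forall h h' : {set V * V}, h \subset E -> h' \subset h -> h' \in P -> h \in P.

Definition covers (V : finType) (H H' : {set V * V}) : bool :=
  (H \subset H') && (#|H'| == #|H|.+1).

(* sign assignment on P, with values in Z_2 = bool (addition = addb) *)
Definition sign_assignment (V : finType) (P : {set {set V * V}})
    (eps : {set V * V} -> {set V * V} -> bool) : Prop :=
  forall H H1 H2 H'' : {set V * V},
    H \in P -> H1 \in P -> H2 \in P -> H'' \in P ->
    covers H H1 -> covers H H2 -> covers H1 H'' -> covers H2 H'' ->
    H1 != H2 ->
    addb (eps H H1) (eps H1 H'') = addb (addb (eps H H2) (eps H2 H'')) true.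

(* covariant functor P -> A (P viewed as a category, unique morphism
   H -> H' iff H \subset H'); only its values on P matter. *)
Definition is_functor (A : additiveCat) (V : finType) (P : {set {set V * V}})
    (Fob : {set V * V} -> Ob A)
    (Fmor : forall H H' : {set V * V}, Hom (Fob H) (Fob H')) : Prop :=
  (forall H, H \in P -> Fmor H H = idm (Fob H)) /\
  (forall H H' H'', H \in P -> H' \in P -> H'' \in P ->
     H \subset H' -> H' \subset H'' ->
     comp (Fmor H H') (Fmor H' H'') = Fmor H H'').

Definition minlen (V : finType) (P : {set {set V * V}}) : nat :=
  \big[minn/#|[set: V * V]|]_(H in P) #|H|.

Definition ell (V : finType) (P : {set {set V * V}}) (H : {set V * V}) : nat :=
  (#|H| - minlen P)%N.

Definition Idx (V : finType) (P : {set {set V * V}}) (n : nat) :=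
  {H : {set V * V} | (H \in P) && (ell P H == n)}.

Definition cochain (A : additiveCat) (V : finType) (P : {set {set V * V}})
    (Fob : {set V * V} -> Ob A) (n : nat) : Ob A :=
  bigob (fun i : Idx P n => Fob (val i)).

Definition sgn (A : additiveCat) (a b : Ob A) (e : bool) (f : Hom a b) :
  Hom a b := if e then - f else f.

Definition diff (A : additiveCat) (V : finType) (P : {set {set V * V}})
    (Fob : {set V * V} -> Ob A)
    (Fmor : forall H H' : {set V * V}, Hom (Fob H) (Fob H'))
    (eps : {set V * V} -> {set V * V} -> bool) (n : nat) :
    Hom (cochain P Fob n) (cochain P Fob n.+1) :=
  \sum_(i : Idx P n) \sum_(j : Idx P n.+1 | covers (val i) (val j))
     comp (bproj i) (comp (sgn (eps (val i) (val j)) (Fmor (val i) (val j)))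
                          (binj j)).

Definition cochain_iso (A : additiveCat) (C D : nat -> Ob A)
    (d1 : forall n, Hom (C n) (C n.+1)) (d2 : forall n, Hom (D n) (D n.+1))
    : Prop :=
  exists (phi : forall n, Hom (C n) (D n)) (psi : forall n, Hom (D n) (C n)),
    forall n, [/\ comp (phi n) (psi n) = idm (C n),
                  comp (psi n) (phi n) = idm (D n) &
                  comp (phi n) (d2 n) = comp (d1 n) (phi n.+1)].

Arguments is_functor {A V} P Fob Fmor.
Arguments cochain {A V} P Fob n.
Arguments diff {A V} P Fob Fmor eps n.
Arguments cochain_iso {A C D} d1 d2.

(* Two sign assignments differ by [eta = eps1 + eps2], whose sum around every
   square vanishes.  When P is downward closed it contains the whole cube of
   subgraphs below each of its members, and there [eta] is a coboundary: after
   ordering the edges, let c(H) be the sum of [eta] along the chain that adds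
   the edges of H in increasing order; the square condition gives
   c(H + e) = c(H) + eta(H, H + e).  The upward closed case reduces to this one
   by complementation in E.  The diagonal map (-1)^c(H) is then an involutive
   isomorphism of cochain complexes intertwining the two differentials. *)
From mathcomp Require Import all_boot all_order all_algebra zify.
From Pilot Require Import Defs.
Set Implicit Arguments. Unset Strict Implicit. Unset Printing Implicit Defensive.
Import GRing.Theory.

Definition prefix (T : finType) (k : nat) (H : {set T}) : {set T} :=
  [set x in H | enum_rank x < k].

Fixpoint chain_sum (T : finType) (eta : {set T} -> {set T} -> bool) (k : nat)
    (H : {set T}) : bool :=
  if k is k'.+1 then
    chain_sum eta k' H (+)
      ((prefix k' H != prefix k H) && eta (prefix k' H) (prefix k H))
  else false.

Section Prefix.

Variable T : finType.
Implicit Types (H : {set T}) (e : T).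

Lemma prefix_subset k H : prefix k H \subset H.
Proof. by apply/subsetP => x; rewrite inE => /andP[]. Qed.

Lemma prefix_full H : prefix #|T| H = H.
Proof. by apply/setP => x; rewrite inE ltn_ord andbT. Qed.

Lemma prefix_setU1 e k H :
  prefix k (e |: H) = if enum_rank e < k then e |: prefix k H else prefix k H.
Proof.
case: ifP => ek; apply/setP => y; rewrite !inE;
  by case: (eqVneq y e) => [->|] //=; rewrite ?ek ?andbF.
Qed.

Lemma prefixS_cases k H :
  prefix k.+1 H = prefix k H \/
  exists2 x, (x \in H) && (enum_rank x == k :> nat) & prefix k.+1 H = x |: prefix k H.
Proof.
have [x /andP[xH xk]|no_k] := pickP [pred x | (x \in H) && (enum_rank x == k :> nat)].
  right; exists x; first by rewrite xH xk.
  apply/setP => y; rewrite !inE ltnS leq_eqVlt.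
  case: (eqVneq y x) => [->|yx]; first by rewrite xH xk.
  suff /negbTE-> : (enum_rank y != k :> nat) by [].
  apply: contra yx => yk; apply/eqP/enum_rank_inj/val_inj.
  by rewrite /= (eqP yk) (eqP xk).
left; apply/setP => y; rewrite !inE ltnS leq_eqVlt.
by have /= := no_k y; case: (y \in H) => //= ->.
Qed.

End Prefix.

Definition square_cocycle (V : finType) (P : {set {set V * V}})
    (eta : {set V * V} -> {set V * V} -> bool) : Prop :=
  forall S S1 S2 S3, S \in P -> S1 \in P -> S2 \in P -> S3 \in P ->
    covers S S1 -> covers S S2 -> covers S1 S3 -> covers S2 S3 -> S1 != S2 ->
    eta S S1 (+) eta S1 S3 = eta S S2 (+) eta S2 S3.

Definition potential (V : finType) (P : {set {set V * V}})
    (eta : {set V * V} -> {set V * V} -> bool) (c : {set V * V} -> bool) : Prop :=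
  forall H H', H \in P -> H' \in P -> covers H H' -> c H' = c H (+) eta H H'.

Section Potential.

Variables (V : finType) (P : {set {set V * V}}).
Variable eta : {set V * V} -> {set V * V} -> bool.
Implicit Types (S H : {set V * V}) (e x : V * V).

Lemma covers_setU1 e S : e \notin S -> covers S (e |: S).
Proof. by move=> eS; rewrite /covers subsetUr cardsU1 eS eqxx. Qed.

Lemma coversP H H' : covers H H' -> exists2 e, e \notin H & H' = e |: H.
Proof.
case/andP=> sHH' /eqP cardH'.
have /cards1P[e He] : #|H' :\: H| == 1 by rewrite cardsD (setIidPr sHH') cardH' subSnn.
have /setDP[eH' eH] : e \in H' :\: H by rewrite He set11.
exists e => //; apply/setP => y; rewrite in_setU1.
have [-> //|ye] := eqVneq y e; apply/idP/idP => [yH'|/(subsetP sHH') //].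
apply: contraTT ye => yH; rewrite negbK.
have : y \in H' :\: H by rewrite inE yH yH'.
by rewrite He inE.
Qed.

Hypothesis eta_cocycle : square_cocycle P eta.

Lemma square_cocycle_setU1 S x e :
  x \notin S -> e \notin S -> x != e ->
  S \in P -> x |: S \in P -> e |: S \in P -> e |: (x |: S) \in P ->
  eta S (x |: S) (+) eta (x |: S) (e |: (x |: S)) =
  eta S (e |: S) (+) eta (e |: S) (e |: (x |: S)).
Proof.
move=> xS eS xe SP xSP eSP exSP.
have exS : e \notin x |: S by rewrite in_setU1 eq_sym (negbTE xe).
have xeS : x \notin e |: S by rewrite in_setU1 (negbTE xe).
apply: eta_cocycle; rewrite ?covers_setU1 //; first by rewrite setUCA covers_setU1.
by apply: contraNneq exS => ->; rewrite setU11.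
Qed.

Lemma chain_sum_setU1 H e : e \notin H ->
    (forall S, S \subset e |: H -> S \in P) ->
  forall k, chain_sum eta k (e |: H) =
    chain_sum eta k H (+) ((enum_rank e < k) && eta (prefix k H) (prefix k (e |: H))).
Proof.
move=> eH belowP; elim=> [//|k IHk] /=; rewrite IHk !prefix_setU1.
have preH := prefix_subset k H.
have eS : e \notin prefix k H by apply: contra eH; apply: (subsetP preH).
have [ek|ke|ek] := ltngtP (enum_rank e) k.
- rewrite ltnS (ltnW ek) /=.
  case: (prefixS_cases k H) => [->|[x /andP[xH /eqP xk] ->]]; first by rewrite !eqxx /= !addbF.
  set S := prefix k H.
  have xS : x \notin S by rewrite inE xk ltnn andbF.
  have xe : x != e by apply: contraNneq eH => <-.
  have xSH : x |: S \subset H by rewrite subUset sub1set xH.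
  have S_neq : S != x |: S by apply: contraNneq xS => ->; apply: setU11.
  have eS_neq : e |: S != e |: (x |: S).
    apply: contraNneq xS => /setP/(_ x).
    by rewrite !in_setU1 eqxx orbT (negbTE xe) /= => ->.
  rewrite S_neq eS_neq /= -!addbA (square_cocycle_setU1 xS eS xe) //; apply: belowP.
  + exact: subset_trans preH (subsetUr _ _).
  + exact: subset_trans xSH (subsetUr _ _).
  + exact: setUS.
  + exact: setUS.
- by rewrite ltnS leqNgt ke /= !addbF.
- rewrite ek ltnSn /=; case: (prefixS_cases k H) => [->|[x /andP[xH /eqP xk] _]].
    have S_neq : prefix k H != e |: prefix k H.
      by apply: contraNneq eS => ->; apply: setU11.
    by rewrite eqxx S_neq /= addbF.
  suff xe : x = e by move: eH; rewrite -xe xH.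
  by apply/enum_rank_inj/val_inj; rewrite /= xk ek.
Qed.

Lemma potential_chain_sum (E : {set V * V}) :
  sub_SSG E P -> downward_closed E P -> potential P eta (chain_sum eta #|{: V * V}|).
Proof.
move=> subP downP H H' _ H'P /coversP[e eH eq_H']; subst H'.
rewrite (chain_sum_setU1 eH) ?prefix_full ?ltn_ord //.
by move=> S sS; apply: (downP S (e |: H)) => //; apply: subset_trans sS (subP _ H'P).
Qed.

End Potential.

Section Complement.

Variables (V : finType) (E : {set V * V}).
Implicit Types (H : {set V * V}) (P : {set {set V * V}}).

Definition complements P : {set {set V * V}} :=
  [set H : {set V * V} | (H \subset E) && (E :\: H \in P)].

Lemma setDDK H : H \subset E -> E :\: (E :\: H) = H.
Proof. by move=> sHE; rewrite setDDr setDv set0U (setIidPr sHE). Qed.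

Lemma covers_setD H H' : H \subset E -> H' \subset E ->
  covers (E :\: H') (E :\: H) = covers H H'.
Proof.
move=> sHE sH'E; rewrite /covers !cardsD (setIidPr sHE) (setIidPr sH'E).
have -> : (E :\: H' \subset E :\: H) = (H \subset H').
  by apply/idP/idP => [/(setDS E)|/(setDS E)//]; rewrite !setDDK.
have := subset_leq_card sHE; have := subset_leq_card sH'E.
by case: (H \subset H') => //= *; apply/eqP/eqP; lia.
Qed.

Lemma complements_downward_closed P : upward_closed E P -> downward_closed E (complements P).
Proof.
move=> upP h h' hE hh'; rewrite !inE hE => /andP[_ h'P].
by apply: (upP _ (E :\: h')) => //; [exact: subsetDl | exact: setDS].
Qed.

Lemma square_cocycle_complements P eta : sub_SSG E P -> square_cocycle P eta ->
  square_cocycle (complements P) (fun H H' => eta (E :\: H') (E :\: H)).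
Proof.
move=> subP etaP S S1 S2 S3; rewrite !inE.
move=> /andP[SE SP] /andP[S1E S1P] /andP[S2E S2P] /andP[S3E S3P] c1 c2 c3 c4 S12.
rewrite addbC [RHS]addbC; apply: etaP; rewrite ?covers_setD //.
by apply: contra S12 => /eqP/(congr1 (setD E)); rewrite !setDDK // => ->.
Qed.

Lemma setD_in_complements P H : sub_SSG E P -> H \in P -> E :\: H \in complements P.
Proof. by move=> subP HP; rewrite inE subsetDl setDDK ?subP. Qed.

Lemma potential_complements P eta c : sub_SSG E P ->
    potential (complements P) (fun H H' => eta (E :\: H') (E :\: H)) c ->
  potential P eta (fun H => c (E :\: H)).
Proof.
move=> subP potc H H' HP H'P covHH'.
rewrite (potc _ _ (setD_in_complements subP H'P) (setD_in_complements subP HP)).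
  by rewrite !setDDK ?subP // -addbA addbb addbF.
by rewrite covers_setD ?subP.
Qed.

End Complement.

Lemma exists_potential (V : finType) (E : {set V * V}) (P : {set {set V * V}}) eta :
  downward_closed E P \/ upward_closed E P -> sub_SSG E P -> square_cocycle P eta ->
  exists c, potential P eta c.
Proof.
move=> [downP|upP] subP etaP; first by eexists; exact (potential_chain_sum etaP subP downP).
have subC : sub_SSG E (complements E P) by move=> H; rewrite inE => /andP[].
eexists; apply: (potential_complements subP).
exact (potential_chain_sum (square_cocycle_complements subP etaP) subC
  (complements_downward_closed upP)).
Qed.

Lemma square_cocycle_addb (V : finType) (P : {set {set V * V}}) eps1 eps2 :
  sign_assignment P eps1 -> sign_assignment P eps2 ->
  square_cocycle P (fun H H' => eps1 H H' (+) eps2 H H').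
Proof.
move=> sign1 sign2 S S1 S2 S3 SP S1P S2P S3P c1 c2 c3 c4 S12.
rewrite addbACA (sign1 S S1 S2 S3) ?(sign2 S S1 S2 S3) //.
by rewrite !addbT addNb addbN negbK addbACA.
Qed.

Section AdditiveCategory.

Variable A : additiveCat.
Implicit Types a b c : Ob A.
Local Open Scope ring_scope.

Lemma comp0l a b c (g : Hom b c) : comp (0 : Hom a b) g = 0.
Proof. by apply: (addrI (comp (0 : Hom a b) g)); rewrite -compDl !addr0. Qed.

Lemma comp0r a b c (f : Hom a b) : comp f (0 : Hom b c) = 0.
Proof. by apply: (addrI (comp f (0 : Hom b c))); rewrite -compDr !addr0. Qed.

Lemma compNl a b c (f : Hom a b) (g : Hom b c) : comp (- f) g = - comp f g.
Proof. by apply/eqP; rewrite -subr_eq0 opprK -compDl addNr comp0l. Qed.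

Lemma compNr a b c (f : Hom a b) (g : Hom b c) : comp f (- g) = - comp f g.
Proof. by apply/eqP; rewrite -subr_eq0 opprK -compDr addNr comp0r. Qed.

Lemma comp_suml a b c (I : Type) (r : seq I) (Q : pred I) (F : I -> Hom a b)
    (g : Hom b c) :
  comp (\sum_(i <- r | Q i) F i) g = \sum_(i <- r | Q i) comp (F i) g.
Proof. by apply: (big_morph (comp^~ g)) => [f f'|]; rewrite ?compDl ?comp0l. Qed.

Lemma comp_sumr a b c (I : Type) (r : seq I) (Q : pred I) (f : Hom a b)
    (F : I -> Hom b c) :
  comp f (\sum_(i <- r | Q i) F i) = \sum_(i <- r | Q i) comp f (F i).
Proof. by apply: (big_morph (comp f)) => [g g'|]; rewrite ?compDr ?comp0r. Qed.

Lemma comp_sgnl a b c e (f : Hom a b) (g : Hom b c) :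
  comp (sgn e f) g = sgn e (comp f g).
Proof. by case: e => //=; rewrite compNl. Qed.

Lemma comp_sgnr a b c e (f : Hom a b) (g : Hom b c) :
  comp f (sgn e g) = sgn e (comp f g).
Proof. by case: e => //=; rewrite compNr. Qed.

Lemma sgn_addb a b e1 e2 (f : Hom a b) : sgn e1 (sgn e2 f) = sgn (e1 (+) e2) f.
Proof. by case: e1; case: e2 => //=; rewrite opprK. Qed.

Lemma sgn_sum a b (I : Type) (r : seq I) (Q : pred I) e (F : I -> Hom a b) :
  sgn e (\sum_(i <- r | Q i) F i) = \sum_(i <- r | Q i) sgn e (F i).
Proof. by case: e => //=; rewrite sumrN. Qed.

Lemma binj_comp_sum (I : finType) (X : I -> Ob A) b (F : forall i, Hom (X i) b) i :
  comp (binj i) (\sum_k comp (bproj k) (F k)) = F i.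
Proof.
rewrite comp_sumr (bigD1 i) //= big1 ?addr0 => [|k ki].
  by rewrite -compA binj_proj comp1m.
by rewrite -compA binj_proj0 1?eq_sym // comp0l.
Qed.

Lemma binj_ext (I : finType) (X : I -> Ob A) b (f g : Hom (bigob X) b) :
  (forall i, comp (binj i) f = comp (binj i) g) -> f = g.
Proof.
move=> eq_fg; rewrite -[f]comp1m -[g]comp1m -bproj_inj_sum !comp_suml.
by apply: eq_bigr => i _; rewrite !compA eq_fg.
Qed.

End AdditiveCategory.

Section SignTwist.

Variables (A : additiveCat) (V : finType) (P : {set {set V * V}}).
Variables (Fob : {set V * V} -> Ob A) (Fmor : forall H H', Hom (Fob H) (Fob H')).
Variable c : {set V * V} -> bool.

Definition sign_twist n : Hom (cochain P Fob n) (cochain P Fob n) :=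
  (\sum_(i : Idx P n) comp (bproj i) (sgn (c (val i)) (binj i)))%R.

Lemma binj_sign_twist n (i : Idx P n) :
  comp (binj i) (sign_twist n) = sgn (c (val i)) (binj i).
Proof. exact: binj_comp_sum. Qed.

Lemma sign_twistK n : comp (sign_twist n) (sign_twist n) = idm (cochain P Fob n).
Proof.
apply: binj_ext => i.
by rewrite -compA binj_sign_twist comp_sgnl binj_sign_twist sgn_addb addbb compm1.
Qed.

Lemma binj_diff eps n (i : Idx P n) :
  comp (binj i) (diff P Fob Fmor eps n) =
  (\sum_(j : Idx P n.+1 | covers (val i) (val j))
     comp (sgn (eps (val i) (val j)) (Fmor (val i) (val j))) (binj j))%R.
Proof.
rewrite /diff; under eq_bigr do rewrite -comp_sumr.
by rewrite binj_comp_sum.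
Qed.

Lemma sign_twist_diff eps1 eps2 n :
  potential P (fun H H' => eps1 H H' (+) eps2 H H') c ->
  comp (sign_twist n) (diff P Fob Fmor eps2 n) =
  comp (diff P Fob Fmor eps1 n) (sign_twist n.+1).
Proof.
move=> potc; apply: binj_ext => i.
rewrite -!compA binj_sign_twist comp_sgnl !binj_diff comp_suml sgn_sum.
apply: eq_bigr => j cov_ij.
rewrite compA binj_sign_twist !comp_sgnl comp_sgnr !sgn_addb.
have /andP[iP _] := valP i; have /andP[jP _] := valP j.
by rewrite (potc _ _ iP jP cov_ij) addbCA addKb.
Qed.

End SignTwist.

Theorem corollary3p18 (V : finType) (E : {set V * V}) (P : {set {set V * V}})
    (A : additiveCat) (Fob : {set V * V} -> Ob A)
    (Fmor : forall H H' : {set V * V}, Defs.Hom (Fob H) (Fob H'))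
    (eps1 eps2 : {set V * V} -> {set V * V} -> bool) :
  loopless E -> sub_SSG E P ->
  (downward_closed E P \/ upward_closed E P) ->
  is_functor P Fob Fmor ->
  sign_assignment P eps1 -> sign_assignment P eps2 ->
  cochain_iso (diff P Fob Fmor eps1) (diff P Fob Fmor eps2).
Proof.
move=> _ subP closedP _ sign1 sign2.
have [c potc] := exists_potential closedP subP (square_cocycle_addb sign1 sign2).
exists (sign_twist P Fob c), (sign_twist P Fob c) => n.
by split; [exact: sign_twistK | exact: sign_twistK | exact: sign_twist_diff].
Qed.
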